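(* Let $G$ be a finite group and let $C$ be an $\mathtt{N}$-class of the first type. Assume that there exist a prime $p$, an integer $r\geq 2$ and an integer $s$ with $0\le s\le r-2$ such that $|\hat{C}|=p^r$ and $|C|=p^r-p^s$. Then $\hat{C}=C\cup\{1\}$. Moreover $s=0$ and $C=[y]_{\diamond}$ for some $y\in G$ such that $o(y)$ is not a prime power and $\phi(o(y))=p^r-1$.
   Context: $\phi$ is Euler's totient function and $o(g)$ the order of $g$. The power graph $\mathcal{P}(G)$ of a finite group $G$ has vertex set $G$, and distinct $x,y$ are adjacent iff $x=y^m$ or $y=x^m$ for some positive integer $m$. For $x\in G$, $N[x]$ is the closed neighbourhood of $x$ in $\mathcal{P}(G)$ (i.e. $x$ together with all vertices adjacent to $x$). Write $x\mathtt{N}y$ iff $N[x]=N[y]$; its classes are the $\mathtt{N}$-classes, $[x]_{\mathtt{N}}$ denoting the class of $x$. Write $x\diamond y$ iff $\langle x\rangle=\langle y\rangle$; $[x]_\diamond$ denotes the class of $x$. The star class $\mathcal{S}$ is $[1]_{\mathtt{N}}$, the set of vertices adjacent to all other vertices. An $\mathtt{N}$-class $C\neq\mathcal{S}$ is of the first type if it is also a $\diamond$-class. For $X\subseteq G$, $N[X]:=\bigcap_{x\in X}N[x]$ and $\hat{X}:=N[N[X]]$. *)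

From mathcomp Require Import all_boot all_fingroup.
Set Implicit Arguments. Unset Strict Implicit. Unset Printing Implicit Defensive.
Local Open Scope group_scope.

Section PowerGraph.
Variable gT : finGroupType.

(* Power graph adjacency: distinct x, y with x a power of y or y a power of x.
   In a finite group, "x = y^m for some positive m" is exactly x \in <[y]>. *)
Definition pg_adj (x y : gT) : bool :=
  (x != y) && ((x \in <[y]>) || (y \in <[x]>)).

Definition cnbhd (x : gT) : {set gT} := [set y | (y == x) || pg_adj x y].

Definition Nclass (x : gT) : {set gT} := [set y | cnbhd y == cnbhd x].

Definition dclass (x : gT) : {set gT} := [set y | <[y]> == <[x]>].

Definition star_class : {set gT} := Nclass 1.

Definition is_Nclass (C : {set gT}) : Prop := exists x, C = Nclass x.

Definition first_type (C : {set gT}) : Prop :=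
  is_Nclass C /\ C != star_class /\ exists x, C = dclass x.

Definition cnbhd_set (X : {set gT}) : {set gT} := \bigcap_(x in X) cnbhd x.
Definition hat (X : {set gT}) : {set gT} := cnbhd_set (cnbhd_set X).

End PowerGraph.

Definition prime_power (n : nat) : Prop := exists q k, prime q /\ n = (q ^ k)%N.

From mathcomp Require Import all_boot all_fingroup all_solvable zify.
Set Implicit Arguments. Unset Strict Implicit. Unset Printing Implicit Defensive.
Local Open Scope group_scope.

(* Write N2(x) := N[N[x]], i.e. cnbhd_set (cnbhd x).  Since C is an N-class,
   N[C] = N[x] for x in C, so hat C = N2(x); since C is also a diamond class,
   |C| = phi(o(x)).  If N2(x) had an element y outside <x>, then x would lie
   in <y> and the whole diamond class of y, of size phi(o(y)) >= phi(o(x)),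
   would lie in N2(x) outside <x>, making |N2(x)| > 2 phi(o(x)) >= p^r.  So
   N2(x) is inside <x>, where y belongs to N2(x) iff o(y) is comparable under
   divisibility with every divisor of o(x).  If o(x) is a prime power this
   holds on all of <x>, so o(x) = p^r and phi(o(x)) = p^r - p^(r-1), forcing
   s = r - 1.  Otherwise only o(y) = 1 and o(y) = o(x) qualify, so
   hat C = C u {1}, whence p^r = p^r - p^s + 1 and s = 0. *)

Lemma dvdn_leq_totient m n : (0 < n)%N -> (m %| n)%N -> (totient m <= totient n)%N.
Proof.
move=> n_gt0 mn; have m_gt0 : (0 < m)%N := dvdn_gt0 n_gt0 mn.
rewrite !totientE // [X in (_ <= X)%N](bigID (mem (primes m))) /=.
apply: (leq_trans _ (leq_pmulr _ _)); last first.
  rewrite big_seq_cond prodn_cond_gt0 // => q /andP[+ _].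
  rewrite mem_primes => /and3P[q_pr _ _].
  by rewrite muln_gt0 -subn1 subn_gt0 prime_gt1 // expn_gt0 prime_gt0.
have primes_m_sub : primes m =i [seq q <- primes n | q \in primes m].
  move=> q; rewrite mem_filter andb_idr // !mem_primes => /and3P[-> _ qm].
  by rewrite n_gt0 (dvdn_trans qm mn).
rewrite -[X in (_ <= X)%N]big_filter.
rewrite (perm_big _ (uniq_perm (primes_uniq m) _ primes_m_sub)); last first.
  by rewrite filter_uniq // primes_uniq.
apply: leq_prod => -[// | q] _.
rewrite leq_mul2l leq_pexp2l ?orbT // -!subn1.
by apply: leq_sub2r; apply: dvdn_leq_log.
Qed.

Lemma pfactor_dvdn_total q k d e :
  prime q -> (d %| q ^ k)%N -> (e %| q ^ k)%N -> (d %| e)%N || (e %| d)%N.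
Proof.
move=> q_pr /(dvdn_pfactor _ _ q_pr)[i _ ->] /(dvdn_pfactor _ _ q_pr)[j _ ->].
by rewrite !dvdn_Pexp2l ?prime_gt1 // leq_total.
Qed.

Lemma dvdn_total_prime_power n m :
    (0 < n)%N -> (m %| n)%N -> (1 < m)%N ->
    (forall d, d %| n -> (m %| d) || (d %| m))%N ->
  m = n \/ prime_power n.
Proof.
move=> n_gt0 mn m_gt1 m_total.
pose q := pdiv m; have q_pr : prime q := pdiv_prime m_gt1.
have qm : (q %| m)%N := pdiv_dvd m.
have n_q'_m : (n`_q^' %| m)%N.
  have /orP[m_nq' | //] := m_total _ (dvdn_part q^' n).
  have : q^'.-nat q by apply: pnat_dvd (dvdn_trans qm m_nq') (part_pnat _ _).
  by rewrite pnatE // !inE /= eqxx.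
have /orP[m_nq | n_q_m] := m_total _ (dvdn_part q n); last first.
  left; apply/eqP; rewrite eqn_dvd mn -(partnC q n_gt0).
  by rewrite Gauss_dvd ?n_q_m ?coprime_partC.
right; exists q, (logn q n); split=> //.
have /eqP nq'1 : (n`_q^' == 1)%N.
  have := coprime_dvdl (dvdn_trans n_q'_m m_nq) (coprime_partC q n n).
  by rewrite /coprime gcdnn.
by rewrite -{1}(partnC q n_gt0) nq'1 muln1 p_part.
Qed.

Lemma leq_double_expn p s r : (1 < p)%N -> (s < r)%N -> ((p ^ s).*2 <= p ^ r)%N.
Proof.
move=> p_gt1 sr; rewrite -(subnK (ltnW sr)) expnD -mul2n leq_mul2r.
by rewrite (leq_trans p_gt1) ?orbT // -{1}(expn1 p) leq_exp2l // subn_gt0.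
Qed.

Lemma totient_pfactor_sub p r :
  prime p -> (0 < r)%N -> totient (p ^ r) = (p ^ r - p ^ r.-1)%N.
Proof.
move=> p_pr r_gt0; rewrite totient_pfactor // -{2}(prednK r_gt0) expnS.
by rewrite -[p.-1]subn1 mulnBl mul1n.
Qed.

Lemma totient_pfactor_eq_sub p r s :
  prime p -> (s <= r)%N -> totient (p ^ r) = (p ^ r - p ^ s)%N -> s = r.-1.
Proof.
move=> p_pr sr; have [r0 | r_gt0] := posnP r; first by move: sr; rewrite r0 leqn0 => /eqP.
rewrite totient_pfactor_sub // => /eqP; rewrite eqn_sub2lE ?leq_pexp2l ?prime_gt0 //.
  by move/eqP/(expnI (prime_gt1 p_pr)).
exact: leq_pred.
Qed.

Section PowerGraphFacts.

Variable gT : finGroupType.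
Implicit Types x y z a : gT.

Lemma cnbhdE x y : (y \in cnbhd x) = (x \in <[y]>) || (y \in <[x]>).
Proof.
by rewrite inE /pg_adj; have [-> | //] := eqVneq y x; rewrite cycle_id.
Qed.

Lemma cnbhd_sym x y : (y \in cnbhd x) = (x \in cnbhd y).
Proof. by rewrite !cnbhdE orbC. Qed.

Lemma cnbhd_refl x : x \in cnbhd x.
Proof. by rewrite cnbhdE cycle_id. Qed.

Lemma mem1_cnbhd x : 1 \in cnbhd x.
Proof. by rewrite cnbhdE group1 orbT. Qed.

Lemma cnbhd_cycle y z : <[y]> = <[z]> -> cnbhd y = cnbhd z.
Proof.
by move=> yz; apply/setP=> a; rewrite !cnbhdE -(cycle_subG y) -(cycle_subG z) yz.
Qed.

Lemma Nclass_eq x y : y \in Nclass x -> Nclass y = Nclass x.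
Proof. by rewrite inE => /eqP xy; apply/setP=> z; rewrite !inE xy. Qed.

Lemma cnbhd_set_Nclass x : cnbhd_set (Nclass x) = cnbhd x.
Proof.
apply/setP=> z; apply/bigcapP/idP => [|zx y]; first by apply; rewrite inE.
by rewrite inE => /eqP ->.
Qed.

Lemma mem1_dclass x : (1 \in dclass x) = (x == 1).
Proof. by rewrite inE cycle1 eq_sym cycle_eq1. Qed.

Lemma card_dclass x : #|dclass x| = totient #[x].
Proof. by rewrite totient_gen; apply: eq_card => y; rewrite !inE /generator eq_sym. Qed.

Lemma card_dclassU1 x : x != 1 -> #|dclass x :|: [set 1]| = (totient #[x]).+1.
Proof. by move=> ntx; rewrite setUC cardsU1 mem1_dclass (negbTE ntx) card_dclass. Qed.

Lemma order_dvdn_cycle x a b :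
  a \in <[x]> -> b \in <[x]> -> (#[a] %| #[b])%N = (a \in <[b]>).
Proof.
by move=> ax bx; rewrite -cycle_subG -(cardSg_cyclic (cycle_cyclic x)) ?cycle_subG.
Qed.

Lemma order_expg_div x d : (d %| #[x])%N -> #[x ^+ (#[x] %/ d)] = d.
Proof. by move=> dx; rewrite orderXdiv ?dvdn_div // divnA // mulKn. Qed.

Lemma mem1_cnbhd_set (X : {set gT}) : 1 \in cnbhd_set X.
Proof. by apply/bigcapP=> a _; apply: mem1_cnbhd. Qed.

Lemma mem_cnbhd2 x : x \in cnbhd_set (cnbhd x).
Proof. by apply/bigcapP=> a; rewrite cnbhd_sym. Qed.

Lemma dclass_sub_cnbhd2 x y :
  y \in cnbhd_set (cnbhd x) -> dclass y \subset cnbhd_set (cnbhd x).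
Proof.
move=> /bigcapP yN; apply/subsetP=> z; rewrite inE => /eqP zy.
by apply/bigcapP=> a ax; rewrite cnbhd_sym (cnbhd_cycle zy) -cnbhd_sym yN.
Qed.

Lemma cnbhd2_sub_cycle x :
    x != 1 -> (#|cnbhd_set (cnbhd x)| <= (totient #[x]).*2)%N ->
  cnbhd_set (cnbhd x) \subset <[x]>.
Proof.
set N := cnbhd_set (cnbhd x) => ntx N_small; apply/subsetP=> y yN.
apply/negPn/negP => yx.
have xy : x \in <[y]>.
  by have := bigcapP yN x (cnbhd_refl x); rewrite cnbhdE (negbTE yx) orbF.
have dclass_y_out : dclass y \subset N :\: <[x]>.
  apply/subsetP=> z zy; rewrite inE (subsetP (dclass_sub_cnbhd2 yN)) // andbT.
  by move: zy; rewrite inE -cycle_subG => /eqP ->; rewrite cycle_subG.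
have dclass_x_in : dclass x :|: [set 1] \subset N :&: <[x]>.
  rewrite subUset sub1set !inE mem1_cnbhd_set group1 subsetI !andbT.
  rewrite dclass_sub_cnbhd2 ?mem_cnbhd2 //; apply/subsetP=> z.
  by rewrite inE -cycle_subG => /eqP ->.
have phi_xy : (totient #[x] <= totient #[y])%N.
  by apply: dvdn_leq_totient (order_gt0 y) _; apply: cardSg; rewrite cycle_subG.
have := leq_add (subset_leq_card dclass_x_in) (subset_leq_card dclass_y_out).
rewrite cardsID card_dclass card_dclassU1 // -mul2n in N_small *; lia.
Qed.

Lemma mem_cnbhd2_cycleP x y : y \in <[x]> ->
  reflect (forall d, d %| #[x] -> (#[y] %| d) || (d %| #[y]))%N
          (y \in cnbhd_set (cnbhd x)).
Proof.
move=> yx; apply: (iffP bigcapP) => [yN d dx | y_total a].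
  have ax : x ^+ (#[x] %/ d) \in <[x]> := mem_cycle x _.
  have /yN : x ^+ (#[x] %/ d) \in cnbhd x by rewrite cnbhdE ax orbT.
  rewrite cnbhdE -(order_dvdn_cycle ax yx) -(order_dvdn_cycle yx ax).
  by rewrite order_expg_div // orbC.
rewrite cnbhdE => /orP[xa | ax].
  by rewrite cnbhdE (subsetP _ y yx) ?orbT // cycle_subG.
rewrite cnbhdE -(order_dvdn_cycle ax yx) -(order_dvdn_cycle yx ax).
by rewrite orbC y_total ?order_dvdG.
Qed.

Lemma cycle_sub_cnbhd2 x : prime_power #[x] -> <[x]> \subset cnbhd_set (cnbhd x).
Proof.
case=> q [k [q_pr ox]]; apply/subsetP=> y yx; apply/(mem_cnbhd2_cycleP yx) => d.
by rewrite ox; apply: pfactor_dvdn_total q_pr _; rewrite -ox order_dvdG.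
Qed.

Lemma cnbhd2_eq_dclassU1 x :
    x != 1 -> ~ prime_power #[x] -> cnbhd_set (cnbhd x) \subset <[x]> ->
  cnbhd_set (cnbhd x) = dclass x :|: [set 1].
Proof.
move=> ntx not_pp N_x; apply/eqP; rewrite eq_sym eqEsubset subUset sub1set.
rewrite mem1_cnbhd_set (dclass_sub_cnbhd2 (mem_cnbhd2 x)) /=; apply/subsetP=> y yN.
have yx := subsetP N_x y yN; rewrite !inE.
have [-> | nty] := eqVneq y 1; first by rewrite orbT.
have [oy | //] := dvdn_total_prime_power (order_gt0 x) (order_dvdG yx)
  (etrans (order_gt1 y) nty) (elimT (mem_cnbhd2_cycleP yx) yN).
by rewrite eqEcard cycle_subG yx orbF; apply/eq_leq/esym.
Qed.

End PowerGraphFacts.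

Theorem mainTheorem1 (gT : finGroupType) (C : {set gT}) (p r s : nat) :
  first_type C -> prime p -> (2 <= r)%N -> (s <= r - 2)%N ->
  #|hat C| = (p ^ r)%N -> #|C| = (p ^ r - p ^ s)%N ->
  hat C = C :|: [set 1] /\ s = 0%N /\
  exists y : gT, C = dclass y /\ ~ prime_power #[y] /\ totient #[y] = (p ^ r - 1)%N.
Proof.
move=> [[x0 C_N] [C_not_star [x C_d]]] p_pr r_ge2 s_le hat_card C_card.
have {x0}C_N : C = Nclass x.
  by rewrite C_N (Nclass_eq (_ : x \in Nclass x0)) // -C_N C_d inE.
have ntx : x != 1 by apply: contraNneq C_not_star => x1; rewrite C_N x1.
have hatE : hat C = cnbhd_set (cnbhd x) by rewrite /hat C_N cnbhd_set_Nclass.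
have phi_x : totient #[x] = (p ^ r - p ^ s)%N by rewrite -card_dclass -C_d C_card.
have s_lt_r : (s < r)%N by lia.
have ps_r : ((p ^ s).*2 <= p ^ r)%N by apply: leq_double_expn (prime_gt1 p_pr) _.
have N_x : cnbhd_set (cnbhd x) \subset <[x]>.
  by rewrite cnbhd2_sub_cycle // phi_x -hatE hat_card; lia.
have not_pp : ~ prime_power #[x].
  move/cycle_sub_cnbhd2 => x_N; move: hat_card.
  rewrite hatE (_ : cnbhd_set _ = <[x]>) => [ox | ]; last first.
    by apply/eqP; rewrite eqEsubset N_x.
  have phi_pr : totient (p ^ r) = (p ^ r - p ^ s)%N by rewrite -{1}ox; exact: phi_x.
  have := totient_pfactor_eq_sub p_pr (ltnW s_lt_r) phi_pr; lia.
have hat_eq : hat C = C :|: [set 1] by rewrite hatE C_d cnbhd2_eq_dclassU1.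
have s0 : s = 0%N.
  move: hat_card; rewrite hat_eq C_d card_dclassU1 // phi_x => ?.
  by apply: (expnI (prime_gt1 p_pr)); rewrite expn0; lia.
split=> //; split=> //; exists x; split=> //; split=> //.
by rewrite phi_x s0.
Qed.
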